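(* Let $N\ge2$ and ${\bm{p}}\in\Delta_K$ with $p_1\ge\dots\ge p_K>0$. Let $L_N({\bm{p}},{\bm{q}})=\sum_kp_k(1-q_k)^N$, let ${\bm{q}}^*(N)$ be its minimizer over ${\bm{q}}\in\Delta_K$, let $\beta_N>0$ be such that $q_k^*(N)=\max\{0,1-\beta_Np_k^{-1/(N-1)}\}$ for all $k$, and $K_N:=\max\{k:q_k^*(N)\ne0\}$. Then $$L^{\mathrm{same}}({\bm{p}}):=L_N({\bm{p}},{\bm{p}})=\sum_{k=1}^Kp_k(1-p_k)^N,$$ $$L^*({\bm{p}}):=L_N({\bm{p}},{\bm{q}}^*(N))=\sum_{k=K_N+1}^Kp_k+(K_N-1)\beta_N^{N-1}\in\left[\sum_{k=K_N+1}^Kp_k+(K_N-1)p_{K_N+1},\ \sum_{k=K_N+1}^Kp_k+(K_N-1)p_{K_N}\right),$$ with the convention $p_{K+1}=0$.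
   Context: $\Delta_K=\{{\bm{r}}\in\mathbb{R}^K:{\bm{r}}\ge0,\ \sum_kr_k=1\}$. $L_N$ is the expected test loss of the memorization model (error $1$ on task $k$ iff no sample from task $k$ among $N$ i.i.d. training samples from the mixture with proportions ${\bm{q}}$). *)

From mathcomp Require Import all_boot all_order all_algebra.
From mathcomp Require Import reals exp.
Set Implicit Arguments. Unset Strict Implicit. Unset Printing Implicit Defensive.
Import Order.TTheory GRing.Theory Num.Theory.
Local Open Scope ring_scope.

(* Vectors in R^K are represented as functions nat -> R, indexed 1..K
   (as in the paper); values outside 1..K are irrelevant. *)

Definition simplex {R : realType} (K : nat) (r : nat -> R) : Prop :=
  (forall k : nat, (1 <= k <= K)%N -> 0 <= r k) /\
  \sum_(1 <= k < K.+1) r k = 1.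

Definition LN {R : realType} (N K : nat) (p q : nat -> R) : R :=
  \sum_(1 <= k < K.+1) p k * (1 - q k) ^+ N.

(* K_N = max { k in 1..K : q_k <> 0 }  (0 if there is none) *)
Definition KN {R : realType} (K : nat) (q : nat -> R) : nat :=
  \max_(1 <= k < K.+1 | q k != 0) k.

Definition pext {R : realType} (K : nat) (p : nat -> R) (k : nat) : R :=
  if (k <= K)%N then p k else 0.

From mathcomp Require Import all_boot all_order all_algebra.
From mathcomp Require Import reals exp.
From mathcomp Require Import zify ring lra.
Import Order.TTheory GRing.Theory Num.Theory.
Local Open Scope ring_scope.

(* Write [a_k := p_k^(1/(N-1))], so that [q_k = max(0, 1 - beta / a_k)].  As
   [a] is nonincreasing, the support of [q] is [{1, ..., K_N}], with
   [beta < a_k] inside and [a_k <= beta] outside.  On the support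
   [p_k (1 - q_k)^N = a_k^(N-1) (beta / a_k)^N = beta^N / a_k], while
   [sum_k q_k = 1] reads [beta * sum_(k <= K_N) 1 / a_k = K_N - 1]; hence
   [L_N(p, q) = sum_(k > K_N) p_k + (K_N - 1) beta^(N-1)], and the bounds
   follow from [a_(K_N+1) <= beta < a_(K_N)] raised to the power [N-1]
   (with [K_N >= 2] making the upper bound strict). *)

Lemma powR_invnK (R : realType) (x : R) (n : nat) :
  0 <= x -> (0 < n)%N -> powR x n%:R^-1 ^+ n = x.
Proof.
move=> x_ge0 n_gt0.
rewrite -powR_mulrn ?powR_ge0 // -powRrM mulVf ?powRr1 //.
by rewrite pnatr_eq0 -lt0n.
Qed.

Lemma leq_KN {R : realType} (K : nat) (q : nat -> R) (k : nat) :
  (1 <= k <= K)%N -> q k != 0 -> (k <= KN K q)%N.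
Proof.
move=> k_in qk; rewrite /KN (@leq_bigmax_seq _ _ (fun k => q k != 0) id k) //.
by rewrite mem_index_iota.
Qed.

Lemma KN_spec {R : realType} (K : nat) (q : nat -> R) :
  KN K q = 0%N \/ (1 <= KN K q <= K)%N /\ q (KN K q) != 0.
Proof.
rewrite /KN big_nat_cond.
apply: (big_ind (fun m => m = 0%N \/ (1 <= m <= K)%N /\ q m != 0)).
- by left.
- by move=> m m' Hm Hm'; case: (leqP m m').
- by move=> k /andP[/andP[k1 kK] qk]; right; rewrite k1 -ltnS kK.
Qed.

Section ThresholdMinimizer.

Context {R : realType} {K n : nat} {a p q : nat -> R} {beta : R}.

Hypothesis a_gt0 : forall k, (1 <= k <= K)%N -> 0 < a k.
Hypothesis a_nonincr : forall k, (1 <= k)%N -> (k < K)%N -> a k.+1 <= a k.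
Hypothesis beta_gt0 : 0 < beta.
Hypothesis qE : forall k, (1 <= k <= K)%N -> q k = Num.max 0 (1 - beta / a k).
Hypothesis q_sum1 : \sum_(1 <= k < K.+1) q k = 1.
Hypothesis pE : forall k, (1 <= k <= K)%N -> p k = a k ^+ n.

Local Notation m := (KN K q).

Lemma a_le k l : (1 <= k <= l)%N -> (l <= K)%N -> a l <= a k.
Proof.
move=> /andP[k1 kl] lK.
apply: (@homo_leq_in _ [pred i | 1 <= i <= K]%N a (fun x y => y <= x)) (kl);
  rewrite ?inE //=.
- by move=> x y z xy yz; apply: le_trans xy.
- by move=> i j + + k'; rewrite !inE; lia.
- by move=> i + ; rewrite !inE => /andP[i1 _] /andP[_ iK]; apply: a_nonincr.
- lia.
- lia.
Qed.

Lemma q_neq0 k : (1 <= k <= K)%N -> (q k != 0) = (beta < a k).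
Proof.
move=> k_in; have -> : (beta < a k) = (0 < 1 - beta / a k).
  by rewrite subr_gt0 ltr_pdivrMr ?mul1r ?a_gt0.
rewrite qE //.
by case: (lerP (1 - beta / a k) 0) => h; rewrite ?eqxx ?gt_eqF.
Qed.

Lemma KN_le : (m <= K)%N.
Proof. by case: (KN_spec K q) => [->|[/andP[]]]. Qed.

Lemma beta_lt_a k : (1 <= k <= m)%N -> beta < a k.
Proof.
move=> k_in; case: (KN_spec K q) => [m0|[m_in qm]]; first lia.
rewrite q_neq0 // in qm; apply: (lt_le_trans qm); apply: a_le; lia.
Qed.

Lemma q_eq0 k : (m < k <= K)%N -> q k = 0.
Proof.
move=> /andP[mk kK]; have k_in : (1 <= k <= K)%N by lia.
by apply/eqP; apply: contraTT mk => qk; rewrite -leqNgt leq_KN.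
Qed.

Lemma a_le_beta k : (m < k <= K)%N -> a k <= beta.
Proof. by move=> k_in; rewrite leNgt -q_neq0 ?q_eq0 ?eqxx //; lia. Qed.

Lemma q_supp k : (1 <= k <= m)%N -> q k = 1 - beta / a k.
Proof.
move=> k_in; have k_in' : (1 <= k <= K)%N by have := KN_le; lia.
rewrite qE // max_r // subr_ge0 ler_pdivrMr ?mul1r ?a_gt0 //.
exact/ltW/beta_lt_a.
Qed.

Lemma sum_split (F : nat -> R) : \sum_(1 <= k < K.+1) F k =
  \sum_(1 <= k < m.+1) F k + \sum_(m.+1 <= k < K.+1) F k.
Proof. by rewrite (big_cat_nat _ (n := m.+1)) // ltnS KN_le. Qed.

Lemma beta_sum_inv : beta * \sum_(1 <= k < m.+1) (a k)^-1 = m%:R - 1.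
Proof.
have tail0 : \sum_(m.+1 <= k < K.+1) q k = 0.
  by rewrite big_nat_cond big1 // => k /andP[k_in _]; apply: q_eq0.
have : \sum_(1 <= k < m.+1) (1 - beta / a k) = 1.
  rewrite -[RHS]q_sum1 sum_split tail0 addr0.
  by apply: eq_big_nat => k k_in; rewrite q_supp.
rewrite sumrB sumr_const_nat subn1 -mulr_sumr; lra.
Qed.

Lemma KN_gt1 : (1 < m)%N.
Proof.
have := beta_sum_inv; case: (KN_spec K q) => [m0|[m_in _] h].
  by rewrite m0 big_geq // mulr0; lra.
rewrite -(ltr1n R) -subr_gt0 -h mulr_gt0 // big_nat_recr /=; last lia.
apply: ltr_wpDl; last by rewrite invr_gt0 a_gt0.
rewrite big_nat_cond; apply: sumr_ge0 => k /andP[k_in _].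
by rewrite invr_ge0 ltW // a_gt0 //; have := KN_le; lia.
Qed.

Lemma LN_thresholdE :
  LN n.+1 K p q = \sum_(m.+1 <= k < K.+1) p k + (m%:R - 1) * beta ^+ n.
Proof.
rewrite /LN sum_split addrC; congr (_ + _).
  by apply: eq_big_nat => k k_in; rewrite q_eq0 // subr0 expr1n mulr1.
rewrite -beta_sum_inv mulrAC -exprS mulr_sumr.
apply: eq_big_nat => k k_in; have k_in' : (1 <= k <= K)%N by have := KN_le; lia.
have ak : a k != 0 by rewrite gt_eqF ?a_gt0.
rewrite q_supp // pE // subKr expr_div_n [a k ^+ n.+1]exprSr.
field; rewrite ak; exact: expf_neq0.
Qed.

Lemma pext_le_beta : pext K p m.+1 <= beta ^+ n.
Proof.
rewrite /pext; case: ifP => mK; last by rewrite exprn_ge0 ?ltW.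
have m1_in : (m < m.+1 <= K)%N by rewrite ltnSn mK.
have a_m1_ge0 : 0 <= a m.+1 by rewrite ltW ?a_gt0.
rewrite pE ?mK //; apply: lerXn2r; rewrite ?nnegrE ?(ltW beta_gt0) //.
exact: a_le_beta.
Qed.

Lemma beta_lt_p : (0 < n)%N -> beta ^+ n < p m.
Proof.
move=> n_gt0; have m_in : (1 <= m <= K)%N by have := KN_le; have := KN_gt1; lia.
rewrite pE // ltrXn2r ?ltW // -?lt0n //.
by apply: beta_lt_a; rewrite leqnn andbT; case/andP: m_in.
Qed.

Lemma LN_threshold : (0 < n)%N ->
  let S := \sum_(m.+1 <= k < K.+1) p k in
  [/\ LN n.+1 K p q = S + (m%:R - 1) * beta ^+ n,
      S + (m%:R - 1) * pext K p m.+1 <= LN n.+1 K p q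
    & LN n.+1 K p q < S + (m%:R - 1) * p m].
Proof.
move=> n_gt0 S; have m_gt1 : 0 < m%:R - 1 :> R by rewrite subr_gt0 ltr1n KN_gt1.
rewrite LN_thresholdE; split=> //.
- by rewrite lerD2l ler_pM2l // pext_le_beta.
- by rewrite ltrD2l ltr_pM2l // beta_lt_p.
Qed.

End ThresholdMinimizer.

Theorem lemmaA8 (R : realType) (K N : nat) (p q : nat -> R) (beta : R) :
  (2 <= N)%N ->
  simplex K p ->
  (forall k : nat, (1 <= k)%N -> (k < K)%N -> p k.+1 <= p k) ->
  (forall k : nat, (1 <= k <= K)%N -> 0 < p k) ->
  (* q is the minimizer q*(N) of L_N(p, .) over the simplex *)
  simplex K q ->
  (forall r : nat -> R, simplex K r -> LN N K p q <= LN N K p r) ->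
  0 < beta ->
  (forall k : nat, (1 <= k <= K)%N ->
     q k = Num.max 0 (1 - beta * powR (p k) (- (N.-1)%:R^-1))) ->
  LN N K p p = \sum_(1 <= k < K.+1) p k * (1 - p k) ^+ N /\
  LN N K p q = \sum_((KN K q).+1 <= k < K.+1) p k
               + ((KN K q)%:R - 1) * beta ^+ N.-1 /\
  \sum_((KN K q).+1 <= k < K.+1) p k + ((KN K q)%:R - 1) * pext K p (KN K q).+1
    <= LN N K p q /\
  LN N K p q < \sum_((KN K q).+1 <= k < K.+1) p k
               + ((KN K q)%:R - 1) * p (KN K q).
Proof.
case: N => [|n] // n_gt0 _ p_nonincr p_gt0 [_ q_sum1] _ beta_gt0 qE /=.
pose a k := powR (p k) n%:R^-1.
have a_gt0 k : (1 <= k <= K)%N -> 0 < a k.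
  by move=> k_in; rewrite powR_gt0 ?p_gt0.
have a_nonincr k : (1 <= k)%N -> (k < K)%N -> a k.+1 <= a k.
  move=> k1 kK; have [pSk_gt0 pk_gt0] : 0 < p k.+1 /\ 0 < p k.
    by split; apply: p_gt0; lia.
  by apply: ge0_ler_powR; rewrite ?nnegrE ?invr_ge0 ?ler0n ?p_nonincr ?ltW.
have pE k : (1 <= k <= K)%N -> p k = a k ^+ n.
  by move=> k_in; rewrite powR_invnK ?ltW ?p_gt0.
have {}qE k : (1 <= k <= K)%N -> q k = Num.max 0 (1 - beta / a k).
  by move=> k_in; rewrite qE // powRN.
by have [] := LN_threshold a_gt0 a_nonincr beta_gt0 qE q_sum1 pE n_gt0.
Qed.
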